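(* Let $\mathcal{K}\subseteq\mathbb{R}^d$ be a convex body, $\kappa\in\mathbb{R}^d$, $\nu\in\mathbb{R}$, and let $a_1,\dots,a_\tau\in\mathbb{R}^d$. For $p\in\mathbb{R}^d$ define $u(p,\nu)=\sum_{t=1}^{\tau}\mathbf{1}\{\langle p-\kappa,a_t\rangle+\nu<0\}$, and for an integer $\bar c\ge0$ let $\mathcal{P}(\bar c,\nu)=\{p\in\mathcal{K}:u(p,\nu)\le\bar c\}$. Then every point $p\in\mathrm{conv}(\mathcal{P}(\bar c,\nu))$ satisfies $u(p,\nu)\le\bar c\,(d+1)$.
   Context: In the paper, $a_t=\Pi_{L}x_t$ are projections of contexts onto a subspace $L$, $\kappa$ is the (approximate) centroid of the current knowledge set, and $u(p,\nu)$ is called the $\nu$-margin projected undesirability level of $p$; $\mathrm{conv}$ denotes convex hull. *)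

From HB Require Import structures.
From mathcomp Require Import all_boot all_order all_algebra.
From mathcomp Require Import all_classical all_reals all_analysis.
Set Implicit Arguments. Unset Strict Implicit. Unset Printing Implicit Defensive.
Import Order.TTheory GRing.Theory Num.Theory.
Import numFieldNormedType.Exports.
Local Open Scope classical_set_scope.
Local Open Scope ring_scope.

Definition dotv (R : realType) (d : nat) (x y : 'rV[R]_d) : R :=
  \sum_(i < d) x 0 i * y 0 i.

Definition convex_set (R : realType) (d : nat) (A : set 'rV[R]_d) : Prop :=
  forall x y (l : R), A x -> A y -> 0 <= l -> l <= 1 -> A (l *: x + (1 - l) *: y).

Definition convex_body (R : realType) (d : nat) (K : set 'rV[R]_d) : Prop :=
  convex_set K /\ compact K /\ (interior K) !=set0.

Definition convex_hull (R : realType) (d : nat) (A : set 'rV[R]_d) : set 'rV[R]_d :=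
  [set p | exists (n : nat) (w : 'I_n -> R) (x : 'I_n -> 'rV[R]_d),
     (forall i, 0 <= w i) /\ \sum_(i < n) w i = 1 /\ (forall i, A (x i)) /\
     p = \sum_(i < n) w i *: x i].

Definition undes (R : realType) (d tau : nat) (kappa : 'rV[R]_d)
  (a : 'I_tau -> 'rV[R]_d) (p : 'rV[R]_d) (nu : R) : nat :=
  \sum_(t < tau) nat_of_bool (dotv (p - kappa) (a t) + nu < 0)%R.

Definition Pset (R : realType) (d tau : nat) (K : set 'rV[R]_d) (kappa : 'rV[R]_d)
  (a : 'I_tau -> 'rV[R]_d) (cbar : nat) (nu : R) : set 'rV[R]_d :=
  [set p | K p /\ (undes kappa a p nu <= cbar)%N].

From HB Require Import structures.
From mathcomp Require Import all_boot all_order all_algebra.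
From mathcomp Require Import all_classical all_reals all_analysis.
Import Order.TTheory GRing.Theory Num.Theory.
Local Open Scope classical_set_scope.
Local Open Scope ring_scope.

(* By Caratheodory's theorem a point of the convex hull is a convex combination
   of at most d+1 points of P(cbar, nu).  The map p |-> <p - kappa, a_t> + nu is
   affine, so if it is negative at such a combination it is negative at one of
   the points; hence u(p, nu) is at most the sum of the u-values of these d+1
   points, each of which is at most cbar. *)

Lemma affine_dependence {F : fieldType} {d n : nat} (x : 'I_n -> 'rV[F]_d) :
  (d.+1 < n)%N ->
  exists2 mu : 'I_n -> F, exists i, mu i != 0 &
    \sum_i mu i *: x i = 0 /\ \sum_i mu i = 0.
Proof.
move=> d_lt_n.
pose M := row_mx (\matrix_(i < n) x i) (const_mx 1 : 'M[F]_(n, 1)).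
have : ~~ row_free M.
  apply: contraTN d_lt_n => /eqP rankM; rewrite -leqNgt -addn1 -rankM.
  exact: rank_leq_col.
rewrite -kermx_eq0 => /rowV0Pn [v]; rewrite sub_kermx mul_mx_row => /eqP vM0 v_neq0.
have [vX0 v10] := eq_row_mx (etrans vM0 (esym (row_mx0 _ _ _ _))).
exists (fun i => v 0 i); last split.
- apply/existsP; apply: contraR v_neq0; rewrite negb_exists => /forallP v0.
  by apply/eqP/rowP => j; rewrite mxE; apply/eqP/negPn/v0.
- by rewrite -[RHS]vX0 mulmx_sum_row; apply: eq_bigr => i _; rewrite rowK.
- move/matrixP: v10 => /(_ 0 0); rewrite !mxE => {2}<-.
  by apply: eq_bigr => i _; rewrite mxE mulr1.
Qed.

Lemma sum_eq0_exists_gt0 {R : realDomainType} {n : nat} {mu : 'I_n -> R} {i1 : 'I_n} :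
  \sum_i mu i = 0 -> mu i1 != 0 -> exists i, 0 < mu i.
Proof.
move=> sum_mu0 mu_i1; apply/existsP; apply: contraR mu_i1.
rewrite negb_exists => /forallP mu_le0.
have Nmu_ge0 i : 0 <= - mu i by rewrite oppr_ge0 leNgt mu_le0.
have /psumr_eq0P Nmu0 : \sum_(i | true) - mu i = 0 by rewrite sumrN sum_mu0 oppr0.
by rewrite -oppr_eq0 Nmu0.
Qed.

Section Caratheodory.
Context {R : realFieldType} {d : nat}.

(* Move the weights along an affine dependence mu until the first one, at the
   index minimising w i / mu i over mu i > 0, vanishes. *)
Lemma caratheodory_step {n : nat} {w : 'I_n -> R} (x : 'I_n -> 'rV[R]_d) :
  (d.+1 < n)%N -> (forall i, 0 <= w i) -> \sum_i w i = 1 ->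
  exists i0, exists2 w' : 'I_n -> R, w' i0 = 0 /\ (forall i, 0 <= w' i) &
    \sum_i w' i = 1 /\ \sum_i w' i *: x i = \sum_i w i *: x i.
Proof.
move=> d_lt_n w_ge0 sum_w1.
have [mu [i1 mu_i1] [sum_mux0 sum_mu0]] := affine_dependence x d_lt_n.
have [i2 mu_i2] := sum_eq0_exists_gt0 sum_mu0 mu_i1.
have [i0 mu_i0 min_i0] := @arg_minP _ _ _ i2 (fun i => 0 < mu i) (fun i => w i / mu i) mu_i2.
pose al := w i0 / mu i0; pose w' i := w i - al * mu i.
exists i0, w'; first split.
- by rewrite /w' /al divfK ?subrr ?gt_eqF.
- move=> i; rewrite subr_ge0; have [mu_i|] := ltP 0 (mu i).
    by rewrite -ler_pdivlMr //; apply: min_i0.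
  move=> mu_le0; apply: (le_trans _ (w_ge0 i)).
  by rewrite mulr_ge0_le0 // divr_ge0 ?w_ge0 ?ltW.
split; first by rewrite sumrB -mulr_sumr sum_mu0 mulr0 subr0.
under eq_bigr do rewrite scalerBl -scalerA.
by rewrite sumrB -scaler_sumr sum_mux0 scaler0 subr0.
Qed.

Lemma caratheodory {P : 'rV[R]_d -> Prop} {n : nat}
    {w : 'I_n -> R} {x : 'I_n -> 'rV[R]_d} :
  (forall i, 0 <= w i) -> \sum_i w i = 1 -> (forall i, P (x i)) ->
  exists m (w' : 'I_m -> R) (x' : 'I_m -> 'rV[R]_d),
    [/\ (m <= d.+1)%N, forall j, 0 <= w' j, \sum_j w' j = 1,
        forall j, P (x' j) & \sum_i w i *: x i = \sum_j w' j *: x' j].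
Proof.
elim: n w x => [|n IH] w x w_ge0 sum_w1 xP; first by exists 0%N, w, x.
have [n_le_d|d_lt_n] := leqP n.+1 d.+1; first by exists n.+1, w, x.
have [i0 [w' [w'_i0 w'_ge0] [sum_w'1 comb_w']]] := caratheodory_step x d_lt_n w_ge0 sum_w1.
rewrite (bigD1_ord i0) //= w'_i0 add0r in sum_w'1.
rewrite (bigD1_ord i0) //= w'_i0 scale0r add0r in comb_w'.
rewrite -comb_w'; apply: IH => // j; exact: xP.
Qed.

End Caratheodory.

Lemma convex_comb_lt0_exists_lt0 {R : realDomainType} {m : nat} {w f : 'I_m -> R} :
  (forall j, 0 <= w j) -> \sum_j w j * f j < 0 -> exists j, f j < 0.
Proof.
move=> w_ge0 comb_lt0; apply/existsP; apply: contraTT comb_lt0.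
rewrite negb_exists -leNgt => /forallP f_ge0.
by apply: sumr_ge0 => j _; rewrite mulr_ge0 // leNgt f_ge0.
Qed.

Lemma dotv_convex_comb {R : realType} {d m : nat} {w : 'I_m -> R}
    (x : 'I_m -> 'rV[R]_d) (k y : 'rV[R]_d) (nu : R) :
  \sum_j w j = 1 ->
  dotv (\sum_j w j *: x j - k) y + nu = \sum_j w j * (dotv (x j - k) y + nu).
Proof.
move=> sum_w1.
under [RHS]eq_bigr do rewrite mulrDr.
rewrite big_split /= -mulr_suml sum_w1 mul1r; congr (_ + _).
rewrite /dotv; under [RHS]eq_bigr do rewrite mulr_sumr.
rewrite exchange_big /=; apply: eq_bigr => i _.
rewrite !mxE summxE; under [RHS]eq_bigr do rewrite !mxE mulrA.
rewrite -mulr_suml; congr (_ * _).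
under [RHS]eq_bigr do rewrite mulrBr.
rewrite sumrB -mulr_suml sum_w1 mul1r; congr (_ - _).
by apply: eq_bigr => j _; rewrite mxE.
Qed.

Lemma undes_convex_comb_le {R : realType} {d tau m : nat} (kappa : 'rV[R]_d)
    (a : 'I_tau -> 'rV[R]_d) (nu : R) {w : 'I_m -> R} (x : 'I_m -> 'rV[R]_d) :
  (forall j, 0 <= w j) -> \sum_j w j = 1 ->
  (undes kappa a (\sum_j w j *: x j) nu <= \sum_j undes kappa a (x j) nu)%N.
Proof.
move=> w_ge0 sum_w1; rewrite /undes exchange_big /=; apply: leq_sum => t _.
case comb_lt0 : (_ < 0) => //=; rewrite dotv_convex_comb // in comb_lt0.
have [j xj_lt0] := convex_comb_lt0_exists_lt0 w_ge0 comb_lt0.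
by rewrite (bigD1 j) //= xj_lt0.
Qed.

Theorem mainTheorem5 (R : realType) (d tau : nat) (K : set 'rV[R]_d)
  (kappa : 'rV[R]_d) (nu : R) (a : 'I_tau -> 'rV[R]_d) (cbar : nat) :
  convex_body K ->
  forall p : 'rV[R]_d, convex_hull (Pset K kappa a cbar nu) p ->
    (undes kappa a p nu <= cbar * d.+1)%N.
Proof.
move=> _ p [n [w [x [w_ge0 [sum_w1 [xP ->]]]]]].
have [m [w' [x' [m_le w'_ge0 sum_w'1 x'P ->]]]] := caratheodory w_ge0 sum_w1 xP.
apply: leq_trans (undes_convex_comb_le _ _ _ _ w'_ge0 sum_w'1) _.
apply: (@leq_trans (\sum_(j < m) cbar)%N); first by apply: leq_sum => j _; case: (x'P j).
by rewrite sum_nat_const card_ord mulnC leq_mul2l m_le orbT.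
Qed.
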